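(* Let $(\mathbf{x}^1,y_l^1,y_r^1),\dots,(\mathbf{x}^T,y_l^T,y_r^T)$ be a sequence of examples with $\mathbf{x}^t\in\mathbb{R}^d$ and integers $1\le y_l^t\le y_r^t\le K$, and run the PA-II algorithm with parameter $C>0$ starting from $\mathbf{w}^1=\mathbf{0}$, $\boldsymbol\theta^1=\mathbf{0}$. Let $c=\min_{t\in[T]}(y_r^t-y_l^t)$, $R^2=\max_{t\in[T]}\Vert\mathbf{x}^t\Vert^2$, $D=1+\frac{1}{2C}+R^2(K-c-1)$, and let $\mathbf{v}=(\mathbf{u},\mathbf{b})$, $\mathbf{u}\in\mathbb{R}^d$, $\mathbf{b}\in\mathbb{R}^{K-1}$, be the parameters of an arbitrary predictor, $\Vert\mathbf{v}\Vert^2=\Vert\mathbf{u}\Vert^2+\Vert\mathbf{b}\Vert^2$. Then $$\sum_{t=1}^T\sum_{i=1}^{K-1}(l_i^t)^2\le D\left(\Vert\mathbf{v}\Vert^2+2C\sum_{t=1}^T\sum_{i=1}^{K-1}(l_i^{t*})^2\right).$$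
   Context: PA-II algorithm with parameter $C>0$: at trial $t$, with $I_t=\{1,\dots,y_l^t-1\}\cup\{y_r^t,\dots,K-1\}$, $(\mathbf{w}^{t+1},\boldsymbol\theta^{t+1})$ is the $(\mathbf{w},\boldsymbol\theta)$-part of the minimizer over $\mathbf{w},\boldsymbol\theta,(\xi_i)_{i\in I_t}$ of $\tfrac12\Vert\mathbf{w}-\mathbf{w}^t\Vert^2+\tfrac12\Vert\boldsymbol\theta-\boldsymbol\theta^t\Vert^2+C\sum_{i\in I_t}\xi_i^2$ subject to $\mathbf{w}\cdot\mathbf{x}^t-\theta_i\ge1-\xi_i$ ($i\le y_l^t-1$) and $\mathbf{w}\cdot\mathbf{x}^t-\theta_i\le-1+\xi_i$ ($i\ge y_r^t$). Losses of the algorithm: $l_i^t=\max(0,1+\theta_i^t-\mathbf{w}^t\cdot\mathbf{x}^t)$ for $1\le i\le y_l^t-1$, $l_i^t=\max(0,1+\mathbf{w}^t\cdot\mathbf{x}^t-\theta_i^t)$ for $y_r^t\le i\le K-1$, $l_i^t=0$ otherwise. Losses of the fixed predictor: $l_i^{t*}=\max(0,1-\mathbf{u}\cdot\mathbf{x}^t+b_i)$ for $1\le i\le y_l^t-1$, $l_i^{t*}=\max(0,1+\mathbf{u}\cdot\mathbf{x}^t-b_i)$ for $y_r^t\le i\le K-1$, $0$ otherwise. *)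

From HB Require Import structures.
From mathcomp Require Import all_boot all_order all_algebra.
Set Implicit Arguments. Unset Strict Implicit. Unset Printing Implicit Defensive.
Import Order.TTheory GRing.Theory Num.Theory.
Local Open Scope ring_scope.

Section PA2.
Variable R : realFieldType.

Definition dotv (n : nat) (a b : 'rV[R]_n) : R := \sum_(i < n) a 0 i * b 0 i.
Definition sqn (n : nat) (a : 'rV[R]_n) : R := dotv a a.

(* Thresholds live in 'rV_(K.-1); the ordinal j : 'I_(K.-1) stands for the
   paper's threshold index i = j+1 (so 1 <= i <= K-1).
   i \in I_t  <->  i <= yl-1  or  i >= yr. *)
Definition inI (K : nat) (yl yr : nat) (j : 'I_K.-1) : bool :=
  (j.+1 < yl)%N || (yr <= j.+1)%N.

Definition pa2_feasible (d K : nat) (x : 'rV[R]_d) (yl yr : nat)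
    (w : 'rV[R]_d) (th : 'rV[R]_K.-1) (xi : 'I_K.-1 -> R) : Prop :=
  forall j : 'I_K.-1,
    ((j.+1 <= yl - 1)%N -> 1 - xi j <= dotv w x - th 0 j) /\
    ((yr <= j.+1)%N -> dotv w x - th 0 j <= -1 + xi j).

Definition pa2_obj (d K : nat) (C : R) (yl yr : nat)
    (w0 : 'rV[R]_d) (th0 : 'rV[R]_K.-1)
    (w : 'rV[R]_d) (th : 'rV[R]_K.-1) (xi : 'I_K.-1 -> R) : R :=
  sqn (w - w0) / 2 + sqn (th - th0) / 2
  + C * \sum_(j < K.-1 | inI yl yr j) xi j ^+ 2.

Definition pa2_step (d K : nat) (C : R) (x : 'rV[R]_d) (yl yr : nat)
    (w0 : 'rV[R]_d) (th0 : 'rV[R]_K.-1) (w1 : 'rV[R]_d) (th1 : 'rV[R]_K.-1)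
    : Prop :=
  exists xi : 'I_K.-1 -> R,
    pa2_feasible x yl yr w1 th1 xi /\
    forall (w : 'rV[R]_d) (th : 'rV[R]_K.-1) (xi' : 'I_K.-1 -> R),
      pa2_feasible x yl yr w th xi' ->
      pa2_obj C yl yr w0 th0 w1 th1 xi <= pa2_obj C yl yr w0 th0 w th xi'.

Definition pa_loss (d K : nat) (w : 'rV[R]_d) (th : 'rV[R]_K.-1)
    (x : 'rV[R]_d) (yl yr : nat) (j : 'I_K.-1) : R :=
  if (j.+1 <= yl - 1)%N then Num.max 0 (1 + th 0 j - dotv w x)
  else if (yr <= j.+1)%N then Num.max 0 (1 + dotv w x - th 0 j)
  else 0.

End PA2.

From HB Require Import structures.
From mathcomp Require Import all_boot all_order all_algebra.
From mathcomp Require Import ring lra zify.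
Set Implicit Arguments. Unset Strict Implicit. Unset Printing Implicit Defensive.
Import Order.TTheory GRing.Theory Num.Theory.
Local Open Scope ring_scope.

(* The PA-II objective is 1-strongly convex in (w, theta) and is minimised over
   a convex set, so comparing the update v_(t+1) with the segment towards any
   feasible competitor v = (u, b, xi* ) gives the three-point inequality
     2 obj(v_(t+1)) + |v - v_(t+1)|^2 <= 2 obj(v) = |v - v_t|^2 + 2C |xi*|^2.
   Conversely, by feasibility of the update, the loss of v_t at a constrained
   threshold i is at most |theta_(t+1,i) - theta_(t,i)| + |xi_i| + |(w_(t+1) - w_t).x|,
   and Cauchy-Schwarz with weights 1, 1/(2C) and |I_t| |x|^2 bounds the squared
   losses by D_t * 2 obj(v_(t+1)), where D_t = 1 + 1/(2C) + |I_t| |x|^2 <= D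
   because |I_t| <= K - 1 - c.  Summing over t, the distances |v - v_t|^2
   telescope. *)

Section RealFieldFacts.
Variable R : realFieldType.

Lemma am_gm_le (z p q : R) : 0 <= p -> 0 <= q -> z ^+ 2 <= p * q -> 2 * z <= p + q.
Proof.
move=> p_ge0 q_ge0 z2_le; rewrite leNgt; apply/negP => lt_z.
have := sqr_ge0 (p - q); nra.
Qed.

Lemma sqr_add3_le (a b c al be ga p q r : R) :
  0 <= al -> 0 <= be -> 0 <= ga -> 0 <= p -> 0 <= q -> 0 <= r ->
  a ^+ 2 <= al * p -> b ^+ 2 <= be * q -> c ^+ 2 <= ga * r ->
  (a + b + c) ^+ 2 <= (al + be + ga) * (p + q + r).
Proof.
move=> al0 be0 ga0 p0 q0 r0 ha hb hc.
have cross (s t ms mt ns nt : R) : 0 <= ms -> 0 <= mt -> 0 <= ns -> 0 <= nt ->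
    s ^+ 2 <= ms * mt -> t ^+ 2 <= ns * nt -> 2 * (s * t) <= ms * nt + ns * mt.
  move=> ms0 mt0 ns0 nt0 hs ht; apply: am_gm_le; rewrite ?mulr_ge0 //.
  have -> : ms * nt * (ns * mt) = (ms * mt) * (ns * nt) by ring.
  by rewrite exprMn ler_pM ?sqr_ge0.
have hab := cross a b al p be q al0 p0 be0 q0 ha hb.
have hac := cross a c al p ga r al0 p0 ga0 r0 ha hc.
have hbc := cross b c be q ga r be0 q0 ga0 r0 hb hc.
have -> : (a + b + c) ^+ 2 =
    a ^+ 2 + b ^+ 2 + c ^+ 2 + 2 * (a * b) + 2 * (a * c) + 2 * (b * c) by ring.
nra.
Qed.

Lemma quad_slope_ge0 (g h : R) :
  (forall l, 0 < l <= 1 -> 0 <= l * g + l ^+ 2 * h) -> 0 <= g.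
Proof.
move=> quad_ge0; rewrite leNgt; apply/negP => g_lt0.
have [h_le0|h_gt0] := lerP h 0.
  by have := quad_ge0 1; rewrite ltr01 lexx => /(_ isT); lra.
pose l := Num.min 1 (- g / (2 * h)).
have l_gt0 : 0 < l by rewrite lt_min ltr01 divr_gt0 ?mulr_gt0 ?oppr_gt0.
have l_le1 : l <= 1 by rewrite ge_min lexx.
have lh_le : l * (2 * h) <= - g by rewrite -ler_pdivlMr ?mulr_gt0 // ge_min lexx orbT.
have := quad_ge0 l; rewrite l_gt0 l_le1 => /(_ isT); nra.
Qed.

Lemma quad_discr_le (S G E : R) :
  0 <= E -> (forall l, 0 <= S + 2 * l * G + l ^+ 2 * E) -> G ^+ 2 <= S * E.
Proof.
move=> E_ge0 quad_ge0.
have [E0|E_neq0] := eqVneq E 0.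
  have := quad_ge0 (- (S + 1) / (2 * G)).
  have [->|G_neq0] := eqVneq G 0; first by rewrite E0; lra.
  have -> : 2 * (- (S + 1) / (2 * G)) * G = - (S + 1) by field.
  rewrite E0; lra.
have E_gt0 : 0 < E by rewrite lt_def E_neq0.
have := quad_ge0 (- G / E).
have -> : S + 2 * (- G / E) * G + (- G / E) ^+ 2 * E = S - G ^+ 2 / E by field.
by rewrite subr_ge0 ler_pdivrMr.
Qed.

Lemma sumr_sqrDZ (I : finType) (P : pred I) (a e : I -> R) (l : R) :
  \sum_(i | P i) (a i + l * e i) ^+ 2 =
  \sum_(i | P i) a i ^+ 2 + 2 * l * \sum_(i | P i) a i * e i
  + l ^+ 2 * \sum_(i | P i) e i ^+ 2.
Proof. by rewrite !mulr_sumr -!big_split /=; apply: eq_bigr => i _; ring. Qed.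

Lemma sum_le_telescope (T : nat) (D : R) (L M Q : nat -> R) :
  0 <= D -> 0 <= Q T ->
  (forall t, (t < T)%N -> L t <= D * (Q t - Q t.+1 + M t)) ->
  \sum_(t < T) L t <= D * (Q 0%N + \sum_(t < T) M t).
Proof.
move=> D_ge0 QT_ge0 step.
apply: le_trans (ler_sum _ (fun (t : 'I_T) _ => step t (ltn_ord t))) _.
rewrite -mulr_sumr big_split /= ler_wpM2l //.
rewrite -(big_mkord xpredT (fun t => Q t - Q t.+1)).
under eq_bigr do rewrite -opprB.
by rewrite sumrN telescope_sumr //; lra.
Qed.

End RealFieldFacts.

Section RowVectors.
Variables (R : realFieldType) (n : nat).
Implicit Types (a e v : 'rV[R]_n) (l : R).

Lemma sqnE v : sqn v = \sum_(i < n) v 0 i ^+ 2.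
Proof. by apply: eq_bigr => i _; rewrite expr2. Qed.

Lemma sqn_ge0 v : 0 <= sqn v.
Proof. by rewrite sqnE sumr_ge0 // => i _; rewrite sqr_ge0. Qed.

Lemma dotvDZl a e v l : dotv (a + l *: e) v = dotv a v + l * dotv e v.
Proof. by rewrite /dotv mulr_sumr -big_split /=; apply: eq_bigr => i _; rewrite !mxE; ring. Qed.

Lemma dotvBl a e v : dotv (a - e) v = dotv a v - dotv e v.
Proof. by rewrite /dotv -sumrB; apply: eq_bigr => i _; rewrite !mxE; ring. Qed.

Lemma sqnDZ a e l : sqn (a + l *: e) = sqn a + 2 * l * dotv a e + l ^+ 2 * sqn e.
Proof. by rewrite !sqnE /dotv -sumr_sqrDZ; apply: eq_bigr => i _; rewrite !mxE. Qed.

Lemma dotv_sqr_le a v : dotv a v ^+ 2 <= sqn a * sqn v.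
Proof. by apply: quad_discr_le (sqn_ge0 v) _ => l; rewrite -sqnDZ sqn_ge0. Qed.

End RowVectors.

Lemma card_inI_le (K yl yr : nat) : (1 <= yl)%N -> (yl <= yr)%N -> (yr <= K)%N ->
  (#|@inI K yl yr| <= K.-1 - (yr - yl))%N.
Proof.
move=> yl_ge1 yl_le_yr yr_le_K; pose P j := ((j.+1 < yl) || (yr <= j.+1))%N.
rewrite -sum1_card (eq_bigl (fun j : 'I_K.-1 => P j)) //.
rewrite -(big_mkord P (fun=> 1%N)) sum1_count /index_iota subn0.
have -> : K.-1 = (yl.-1 + (yr - yl) + (K - yr))%N by lia.
rewrite !iotaD !count_cat !add0n.
rewrite [count P (iota yl.-1 _)](@eq_in_count _ _ pred0) ?count_pred0; last first.
  by move=> j; rewrite mem_iota /P /=; lia.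
have := count_size P (iota 0 yl.-1); have := count_size P (iota (yl.-1 + (yr - yl)) (K - yr)).
rewrite !size_iota; lia.
Qed.

Section PA2.
Variables (R : realFieldType) (d K : nat) (C : R) (x : 'rV[R]_d) (yl yr : nat).
Hypothesis C_gt0 : 0 < C.
Implicit Types (w u : 'rV[R]_d) (th b : 'rV[R]_K.-1) (xi xs : 'I_K.-1 -> R).

Lemma mul2_pa2_obj w0 th0 w th xi :
  2 * pa2_obj C yl yr w0 th0 w th xi =
  sqn (w - w0) + sqn (th - th0) + 2 * C * \sum_(j < K.-1 | inI yl yr j) xi j ^+ 2.
Proof. by rewrite /pa2_obj; field. Qed.

Lemma pa2_feasible_segment w1 th1 xi u b xs l :
  pa2_feasible x yl yr w1 th1 xi -> pa2_feasible x yl yr u b xs -> 0 <= l <= 1 ->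
  pa2_feasible x yl yr (w1 + l *: (u - w1)) (th1 + l *: (b - th1))
    (fun j => xi j + l * (xs j - xi j)).
Proof.
move=> F1 Fs /andP[l_ge0 l_le1] j; have [A1 A2] := F1 j; have [B1 B2] := Fs j.
rewrite dotvDZl dotvBl !mxE.
by split=> hj; [move: (A1 hj) (B1 hj) | move: (A2 hj) (B2 hj)]; nra.
Qed.

Lemma pa2_obj_segment w0 th0 w1 th1 xi u b xs : exists g, forall l,
  pa2_obj C yl yr w0 th0 (w1 + l *: (u - w1)) (th1 + l *: (b - th1))
    (fun j => xi j + l * (xs j - xi j)) =
  pa2_obj C yl yr w0 th0 w1 th1 xi + l * g
  + l ^+ 2 * (sqn (u - w1) / 2 + sqn (b - th1) / 2
              + C * \sum_(j < K.-1 | inI yl yr j) (xs j - xi j) ^+ 2).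
Proof.
exists (dotv (w1 - w0) (u - w1) + dotv (th1 - th0) (b - th1)
        + 2 * C * \sum_(j < K.-1 | inI yl yr j) xi j * (xs j - xi j)) => l.
by rewrite /pa2_obj !(addrAC _ (l *: _)) !sqnDZ sumr_sqrDZ; field.
Qed.

Lemma eq_pa2_obj w0 th0 w th xi xi' : xi =1 xi' ->
  pa2_obj C yl yr w0 th0 w th xi = pa2_obj C yl yr w0 th0 w th xi'.
Proof. by move=> eq_xi; rewrite /pa2_obj; under eq_bigr do rewrite eq_xi. Qed.

Lemma pa2_step_three_point w0 th0 w1 th1 u b xs :
  pa2_step C x yl yr w0 th0 w1 th1 -> pa2_feasible x yl yr u b xs ->
  exists2 xi, pa2_feasible x yl yr w1 th1 xi &
    2 * pa2_obj C yl yr w0 th0 w1 th1 xi + (sqn (u - w1) + sqn (b - th1))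
    <= 2 * pa2_obj C yl yr w0 th0 u b xs.
Proof.
move=> [xi [F1 min1]] Fs; exists xi => //.
have [g obj_segment] := pa2_obj_segment w0 th0 w1 th1 xi u b xs.
have g_ge0 : 0 <= g.
  apply: quad_slope_ge0 => l /andP[l_gt0 l_le1].
  have l_01 : 0 <= l <= 1 by rewrite ltW.
  have := min1 _ _ _ (pa2_feasible_segment F1 Fs l_01).
  by rewrite obj_segment -addrA lerDl; apply.
have obj_end : pa2_obj C yl yr w0 th0 u b xs =
    pa2_obj C yl yr w0 th0 (w1 + 1 *: (u - w1)) (th1 + 1 *: (b - th1))
      (fun j => xi j + 1 * (xs j - xi j)).
  rewrite !scale1r !(addrC w1) !(addrC th1) !subrK.
  by apply: eq_pa2_obj => j; rewrite mul1r addrC subrK.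
have err_ge0 : 0 <= C * \sum_(j < K.-1 | inI yl yr j) (xs j - xi j) ^+ 2.
  by apply: mulr_ge0; [exact: ltW | apply: sumr_ge0 => j _; rewrite sqr_ge0].
rewrite obj_end obj_segment expr1n !mul1r; lra.
Qed.

Lemma pa_loss_ge0 w th j : 0 <= pa_loss w th x yl yr j.
Proof. by rewrite /pa_loss; case: ifP => _; [|case: ifP => _]; rewrite ?le_max ?lexx. Qed.

Lemma pa_loss_eq0 w th j : ~~ inI yl yr j -> pa_loss w th x yl yr j = 0.
Proof. by move=> /norP[lt_l le_r]; rewrite /pa_loss !ifF //; lia. Qed.

Lemma sum_pa_loss_sqr_inI w th :
  \sum_(j < K.-1) pa_loss w th x yl yr j ^+ 2 =
  \sum_(j < K.-1 | inI yl yr j) pa_loss w th x yl yr j ^+ 2.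
Proof.
rewrite (bigID (inI yl yr)) /= [X in _ + X]big1 ?addr0 // => j /pa_loss_eq0 ->.
by rewrite expr0n.
Qed.

Lemma pa_loss_feasible u b :
  (yl <= yr)%N -> pa2_feasible x yl yr u b (pa_loss u b x yl yr).
Proof.
move=> yl_le_yr j; have le_max0 (z : R) : z <= Num.max 0 z by rewrite le_max lexx orbT.
rewrite /pa_loss; split=> hj.
  by rewrite hj; have := le_max0 (1 + b 0 j - dotv u x); lra.
rewrite ifF; last by lia.
by rewrite hj; have := le_max0 (1 + dotv u x - b 0 j); lra.
Qed.

Lemma pa_loss_le_step w0 th0 w1 th1 xi j : pa2_feasible x yl yr w1 th1 xi ->
  pa_loss w0 th0 x yl yr j <= `|(th1 - th0) 0 j| + `|xi j| + `|dotv (w1 - w0) x|.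
Proof.
move=> F; have [F_l F_r] := F j.
have norm_bounds (z : R) : - `|z| <= z <= `|z| by rewrite -ler_norml.
have /andP[th_l th_r] := norm_bounds ((th1 - th0) 0 j).
have /andP[xi_l xi_r] := norm_bounds (xi j).
have /andP[dot_l dot_r] := norm_bounds (dotv (w1 - w0) x).
move: th_l th_r dot_l dot_r; rewrite dotvBl !mxE => th_l th_r dot_l dot_r.
rewrite /pa_loss; case: ifP => [hl|_]; [|case: ifP => [hr|_]];
  rewrite ?ge_max ?addr_ge0 //=; [move: (F_l hl) | move: (F_r hr)]; lra.
Qed.

Definition pa2_rate : R := 1 + 1 / (2 * C) + sqn x * #|@inI K yl yr|%:R.

Lemma pa2_rate_ge0 : 0 <= pa2_rate.
Proof. by rewrite !addr_ge0 ?ler01 ?divr_ge0 ?mulr_ge0 ?sqn_ge0 ?ler0n ?ltW. Qed.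

Lemma pa2_rate_le (R2 : R) (c : nat) :
  (1 <= yl)%N -> (yl <= yr)%N -> (yr <= K)%N -> (c <= yr - yl)%N -> sqn x <= R2 ->
  pa2_rate <= 1 + 1 / (2 * C) + R2 * (K%:R - c%:R - 1).
Proof.
move=> yl_ge1 yl_le_yr yr_le_K c_le x_le.
have card_le : #|@inI K yl yr|%:R <= K%:R - c%:R - 1 :> R.
  have := card_inI_le yl_ge1 yl_le_yr yr_le_K => card_le.
  have : (#|@inI K yl yr| + c + 1 <= K)%N by lia.
  by rewrite -(ler_nat R) !natrD; lra.
by rewrite /pa2_rate lerD2l ler_pM ?sqn_ge0 ?ler0n.
Qed.

Lemma pa_loss_sqr_le w0 th0 w1 th1 xi j :
  inI yl yr j -> pa2_feasible x yl yr w1 th1 xi ->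
  pa_loss w0 th0 x yl yr j ^+ 2 <=
  pa2_rate *
  ((th1 - th0) 0 j ^+ 2 + 2 * C * xi j ^+ 2 + sqn (w1 - w0) / #|@inI K yl yr|%:R).
Proof.
move=> jI F; rewrite /pa2_rate; set m : R := #|_|%:R.
have m_gt0 : 0 < m by rewrite ltr0n; apply/card_gt0P; exists j.
have C2_gt0 : 0 < 2 * C by rewrite mulr_gt0.
have normK (z : R) : `|z| ^+ 2 = z ^+ 2 by rewrite real_normK ?num_real.
apply: le_trans (_ : _ <= (`|(th1 - th0) 0 j| + `|xi j| + `|dotv (w1 - w0) x|) ^+ 2) _.
  by rewrite ler_sqr ?nnegrE ?pa_loss_ge0 ?addr_ge0 ?pa_loss_le_step.
apply: sqr_add3_le.
- exact: ler01.
- by rewrite divr_ge0 ?ltW.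
- by rewrite mulr_ge0 ?sqn_ge0 ?ler0n.
- exact: sqr_ge0.
- by rewrite mulr_ge0 ?sqr_ge0 ?ltW.
- by rewrite divr_ge0 ?sqn_ge0 ?ler0n.
- by rewrite normK mul1r.
- by rewrite normK mulrA mul1r mulVf ?gt_eqF // mul1r.
- rewrite normK mulrACA divff ?gt_eqF // mulr1 mulrC.
  exact: dotv_sqr_le.
Qed.

Lemma sum_pa_loss_sqr_le w0 th0 w1 th1 xi : pa2_feasible x yl yr w1 th1 xi ->
  \sum_(j < K.-1) pa_loss w0 th0 x yl yr j ^+ 2 <=
  pa2_rate * (2 * pa2_obj C yl yr w0 th0 w1 th1 xi).
Proof.
move=> F.
have w_part :
    \sum_(j < K.-1 | inI yl yr j) sqn (w1 - w0) / #|@inI K yl yr|%:R <= sqn (w1 - w0).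
  set m : R := #|_|%:R; rewrite sumr_const -mulr_natr -/m.
  have [->|m_neq0] := eqVneq m 0; first by rewrite mulr0 sqn_ge0.
  by rewrite divfK.
have th_part : \sum_(j < K.-1 | inI yl yr j) (th1 - th0) 0 j ^+ 2 <= sqn (th1 - th0).
  rewrite sqnE [leRHS](bigID (inI yl yr)) /= lerDl.
  by rewrite sumr_ge0 // => j _; rewrite sqr_ge0.
rewrite sum_pa_loss_sqr_inI mul2_pa2_obj.
apply: le_trans (ler_sum _ (fun j jI => pa_loss_sqr_le w0 th0 jI F)) _.
rewrite -mulr_sumr !big_split /= -mulr_sumr ler_wpM2l ?pa2_rate_ge0 //; lra.
Qed.

Lemma pa2_round_bound (D : R) w0 th0 w1 th1 u b :
  (yl <= yr)%N -> pa2_step C x yl yr w0 th0 w1 th1 ->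
  pa2_rate <= D ->
  \sum_(j < K.-1) pa_loss w0 th0 x yl yr j ^+ 2 <=
  D * (sqn (u - w0) + sqn (b - th0) - (sqn (u - w1) + sqn (b - th1))
       + 2 * C * \sum_(j < K.-1) pa_loss u b x yl yr j ^+ 2).
Proof.
move=> yl_le_yr step rate_le_D.
have [xi F1 three_point] := pa2_step_three_point step (pa_loss_feasible u b yl_le_yr).
rewrite [leRHS]mul2_pa2_obj -sum_pa_loss_sqr_inI in three_point.
have obj_ge0 : 0 <= 2 * pa2_obj C yl yr w0 th0 w1 th1 xi.
  rewrite mul2_pa2_obj !addr_ge0 ?sqn_ge0 // !mulr_ge0 ?ler0n ?(ltW C_gt0) //.
  by rewrite sumr_ge0 // => j _; rewrite sqr_ge0.
apply: le_trans (sum_pa_loss_sqr_le w0 th0 F1) _.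
apply: le_trans (ler_wpM2r obj_ge0 rate_le_D) _.
by rewrite ler_wpM2l ?(le_trans pa2_rate_ge0) //; lra.
Qed.
End PA2.

Theorem theorem6 (R : realFieldType) (d K T : nat) (C : R)
    (x : nat -> 'rV[R]_d) (yl yr : nat -> nat)
    (w : nat -> 'rV[R]_d) (th : nat -> 'rV[R]_K.-1)
    (u : 'rV[R]_d) (b : 'rV[R]_K.-1) :
  (0 < T)%N -> 0 < C ->
  (forall t, (t < T)%N -> [/\ (1 <= yl t)%N, (yl t <= yr t)%N & (yr t <= K)%N]) ->
  w 0%N = 0 -> th 0%N = 0 ->
  (forall t, (t < T)%N ->
     pa2_step C (x t) (yl t) (yr t) (w t) (th t) (w t.+1) (th t.+1)) ->
  let c : nat := \big[minn/K]_(t < T) (yr t - yl t)%N in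
  let R2 : R := \big[Num.max/0]_(t < T) sqn (x t) in
  let D : R := 1 + 1 / (2 * C) + R2 * (K%:R - c%:R - 1) in
  \sum_(t < T) \sum_(j < K.-1) pa_loss (w t) (th t) (x t) (yl t) (yr t) j ^+ 2
  <= D * (sqn u + sqn b
          + 2 * C * \sum_(t < T) \sum_(j < K.-1)
                      pa_loss u b (x t) (yl t) (yr t) j ^+ 2).
Proof.
move=> T_gt0 C_gt0 y_bounds w_0 th_0 steps; cbv zeta.
set c := \big[minn/K]_(t < T) _; set R2 := \big[Num.max/0]_(t < T) _.
set D := 1 + 1 / (2 * C) + _.
have rate_le_D t : (t < T)%N -> pa2_rate K C (x t) (yl t) (yr t) <= D.
  move=> t_lt_T; have [yl_ge1 yl_le_yr yr_le_K] := y_bounds t t_lt_T.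
  apply: pa2_rate_le => //.
    rewrite /c -minEnat -leEnat.
    exact: (bigmin_le _ (Ordinal t_lt_T) (fun i : 'I_T => yr i - yl i)%N).
  exact: (le_bigmax _ (fun i : 'I_T => sqn (x i)) (Ordinal t_lt_T)).
have D_ge0 : 0 <= D := le_trans (pa2_rate_ge0 K _ _ _ C_gt0) (rate_le_D 0%N T_gt0).
have -> : sqn u + sqn b = sqn (u - w 0%N) + sqn (b - th 0%N) by rewrite w_0 th_0 !subr0.
rewrite mulr_sumr.
apply: (sum_le_telescope
  (L := fun t => \sum_(j < K.-1) pa_loss (w t) (th t) (x t) (yl t) (yr t) j ^+ 2)
  (M := fun t => 2 * C * \sum_(j < K.-1) pa_loss u b (x t) (yl t) (yr t) j ^+ 2)
  (Q := fun t => sqn (u - w t) + sqn (b - th t))) => //.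
  by rewrite addr_ge0 ?sqn_ge0.
move=> t t_lt_T; have [_ yl_le_yr _] := y_bounds t t_lt_T.
exact: (pa2_round_bound C_gt0 u b yl_le_yr (steps t t_lt_T) (rate_le_D t t_lt_T)).
Qed.
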